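(* Let $\Gamma$ be a connected signed graph with $n$ vertices and $m$ edges, and let $\mu_1\ge\mu_2\ge\cdots\ge\mu_n\ge 0$ be the eigenvalues of its Laplacian matrix $L(\Gamma)$ (with multiplicity). Let $p$ be a positive integer. Then the spectrum of the adjacency matrix of $S_p(\Gamma)$, as a multiset, is: if $\Gamma$ is balanced (in which case $\mu_n=0$): $0$ with multiplicity $pm-n+2$, together with $\pm\sqrt{p\mu_i}$ for $i=1,\dots,n-1$; if $\Gamma$ is unbalanced: $0$ with multiplicity $pm-n$, together with $\pm\sqrt{p\mu_i}$ for $i=1,\dots,n$.
   Context: A signed graph $\Gamma=(G,\sigma)$ is a simple graph $G$ with a sign function $\sigma:E(G)\to\{1,-1\}$; its adjacency matrix $A(\Gamma)$ has $(i,j)$ entry $\sigma(v_iv_j)$ if $v_iv_j\in E(G)$ and $0$ otherwise, and its Laplacian matrix is $L(\Gamma)=D(G)-A(\Gamma)$ with $D(G)$ the diagonal degree matrix. $\Gamma$ is balanced if every cycle has an even number of negative edges, unbalanced otherwise. The spectrum of a signed graph means the spectrum of its adjacency matrix. Orientation: for $\Gamma$ with vertices $v_1,\dots,v_n$ and edges $e_1,\dots,e_m$, fix a function $\vartheta$ assigning to each pair $(v,e)$ with $v$ an end of $e$ a value $\vartheta(v,e)\in\{1,-1\}$, such that for every edge $e=vw$, $\vartheta(v,e)\vartheta(w,e)=-\sigma(e)$. The signed graph $S_p(\Gamma)$ ($p$ a positive integer): its vertex set is $V(G)\cup\{e_j^{(t)}:1\le j\le m,\ 1\le t\le p\}$;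 its edges are exactly the pairs $v\,e_j^{(t)}$ with $v$ an end of $e_j$ in $G$, with sign $\vartheta(v,e_j)$ (the edges of $G$ are not kept). It has $n+pm$ vertices and $2pm$ edges; $S_1(\Gamma)=S(\Gamma)$ is the signed subdivision graph. *)

From HB Require Import structures.
From mathcomp Require Import all_boot all_order all_algebra.
Set Implicit Arguments. Unset Strict Implicit. Unset Printing Implicit Defensive.
Import Order.TTheory GRing.Theory Num.Theory.
Local Open Scope ring_scope.

(* A signed graph Gamma on vertex set 'I_n with m edges e_0..e_(m-1):
   edge k has ends [u k] and [v k] and sign [sigma k] (in {1,-1}). *)

Section SignedGraph.
Variables (n m : nat) (u v : 'I_m -> 'I_n) (sigma : 'I_m -> int).

Definition simple_signed_graph : Prop :=
  (forall k, u k != v k) /\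
  (forall k l, [set u k; v k] = [set u l; v l] -> k = l) /\
  (forall k, sigma k = 1 \/ sigma k = -1).

Definition joins (k : 'I_m) (i j : 'I_n) : bool :=
  ((u k == i) && (v k == j)) || ((u k == j) && (v k == i)).

Definition adjr : rel 'I_n := fun i j => [exists k, joins k i j].

Definition connected_graph : Prop := forall i j, connect adjr i j.

Definition neg_edge (i j : 'I_n) : bool := [exists k, joins k i j && (sigma k == -1)].

Definition is_cycle (c : seq 'I_n) : bool :=
  [&& uniq c, 2 < size c & cycle adjr c]%N.

Definition num_neg_edges (c : seq 'I_n) : nat :=
  count (fun xy => neg_edge xy.1 xy.2) (zip c (rot 1 c)).

Definition balanced : Prop :=
  forall c, is_cycle c -> ~~ odd (num_neg_edges c).

Definition adj_mx (R : nzRingType) : 'M[R]_n :=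
  \matrix_(i, j) \sum_(k | joins k i j) (sigma k)%:~R.

Definition degree (i : 'I_n) : nat := #|[set k : 'I_m | (u k == i) || (v k == i)]|.

Definition lap_mx (R : nzRingType) : 'M[R]_n :=
  \matrix_(i, j) (((degree i)%:R *+ (i == j)) - adj_mx R i j).

(* orientation: thu k = theta(u k, e_k), thv k = theta(v k, e_k) *)
Definition orientation (thu thv : 'I_m -> int) : Prop :=
  (forall k, thu k = 1 \/ thu k = -1) /\ (forall k, thv k = 1 \/ thv k = -1) /\
  (forall k, thu k * thv k = - sigma k).

(* vertex set of S_p(Gamma): V(G) + {e_k^(t)} *)
Definition Sp_vertex (p : nat) : finType := ('I_n + ('I_p * 'I_m))%type.

Definition Sp_entry (R : nzRingType) (p : nat) (thu thv : 'I_m -> int)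
    (x y : Sp_vertex p) : R :=
  let f (w : 'I_n) (k : 'I_m) : R :=
      ((if w == u k then thu k else 0) + (if w == v k then thv k else 0))%:~R in
  match x, y with
  | inl w, inr (t, k) => f w k
  | inr (t, k), inl w => f w k
  | _, _ => 0
  end.

Definition Sp_adj_mx (R : nzRingType) (p : nat) (thu thv : 'I_m -> int)
  : 'M[R]_#|Sp_vertex p| :=
  \matrix_(a, b) Sp_entry R thu thv (enum_val a) (enum_val b).

End SignedGraph.

From HB Require Import structures.
From mathcomp Require Import all_boot all_order all_algebra.
From mathcomp Require perm.
From mathcomp Require Import zify lra.
Import Order.TTheory GRing.Theory Num.Theory.

(* Write L(Γ) = N Nᵀ with N the vertex–edge incidence matrix, N(w, e) = ϑ(w, e).
   Listing the vertices of Γ before the subdivision vertices, A(S_p(Γ)) is the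
   bipartite block matrix with off-diagonal block B = [N ⋯ N] (p copies), and
   B Bᵀ = p L(Γ); a Schur complement step gives
   X^(n+pm) χ(A(S_p(Γ))) = X^(2pm) det(X² − p L) = X^(2pm) ∏ (X² − p μ_i).
   Cancelling the powers of X needs n ≤ m + 1 and, for unbalanced Γ, n ≤ m.
   On a connected graph a left kernel vector of N has constant absolute value,
   so the kernel has rank at most one; a nonzero kernel vector changes sign
   exactly along negative edges, which forces balance.  Conversely, if Γ is
   balanced then closed walks have an even number of negative edges, so the
   switching vector (the sign of walks from a root) is a well-defined kernel
   vector, L is singular and μ_n = 0. *)

Set Implicit Arguments. Unset Strict Implicit. Unset Printing Implicit Defensive.
Local Open Scope ring_scope.

Lemma zip_rconsl (S T : Type) (s : seq S) (t : seq T) x :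
  size s = size t -> zip (rcons s x) t = zip s t.
Proof. by elim: s t => [|a s IH] [|b t] //= [/IH ->]. Qed.

Lemma drop_zip (S T : Type) k (s : seq S) (t : seq T) :
  drop k (zip s t) = zip (drop k s) (drop k t).
Proof. by elim: k s t => [|k IH] [|a s] [|b t] //=; case: (drop k _). Qed.

Lemma take_zip (S T : Type) k (s : seq S) (t : seq T) :
  take k (zip s t) = zip (take k s) (take k t).
Proof. by elim: k s t => [|k IH] [|a s] [|b t] //=; rewrite IH. Qed.

Lemma zip_rot (S T : Type) k (s : seq S) (t : seq T) :
  size s = size t -> zip (rot k s) (rot k t) = rot k (zip s t).
Proof. by move=> st; rewrite /rot zip_cat ?size_drop ?st // drop_zip take_zip. Qed.

Lemma not_uniq_split (T : eqType) (s : seq T) : ~~ uniq s ->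
  exists a y b c, s = a ++ y :: b ++ y :: c.
Proof.
elim: s => [|z s IH] //=; rewrite negb_and negbK; case/orP => [zs|/IH].
  by case/splitPr: zs => b c; exists [::], z, b, c.
by case=> a [y [b [c ->]]]; exists (z :: a), y, b, c.
Qed.

Lemma char_poly_reindex (R : comNzRingType) K1 K2 (h : 'I_K1 -> 'I_K2)
    (A : 'M[R]_K2) :
  bijective h -> char_poly (\matrix_(i, j) A (h i) (h j)) = char_poly A.
Proof.
move=> hb; have e : K1 = K2 by have := bij_eq_card hb; rewrite !card_ord.
subst K2; pose s := perm.perm (bij_inj hb).
have -> : \matrix_(i, j) A (h i) (h j) = row_perm s (col_perm s A).
  by apply/matrixP => i j; rewrite !mxE !perm.permE.
rewrite /char_poly.
have -> : char_poly_mx (row_perm s (col_perm s A)) =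
          row_perm s (col_perm s (char_poly_mx A)).
  by apply/matrixP => i j; rewrite !mxE !perm.permE (inj_eq (bij_inj hb)).
rewrite row_permE col_permE !det_mulmx !det_perm perm.odd_permV.
by rewrite mulrCA -expr2 sqrr_sign mulr1.
Qed.

Lemma char_poly_det0_root (R : fieldType) K (A : 'M[R]_K) (mu : 'I_K -> R) :
  \det A = 0 -> char_poly A = \prod_i ('X - (mu i)%:P) -> exists k, mu k = 0.
Proof.
move=> dA cA; have : (char_poly A).[0] = 0.
  by rewrite horner_coef0 char_poly_det dA mulr0.
rewrite cA horner_prod => /eqP /prodf_eq0 [k _].
by rewrite hornerXsubC sub0r oppr_eq0 => /eqP; exists k.
Qed.

(* det (q - a L) = a ^ K * char_poly L (q / a) *)
Lemma det_scalar_sub_scale (R : fieldType) K (L : 'M[R]_K) (mu : 'I_K -> R)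
    (a : R) (q : {poly R}) :
  a != 0 -> char_poly L = \prod_i ('X - (mu i)%:P) ->
  \det (q%:M - map_mx polyC (a *: L)) = \prod_i (q - (a * mu i)%:P).
Proof.
move=> a0 cL; pose q' := a^-1 *: q.
have e1 : map_mx (comp_poly q') (char_poly_mx L) = q'%:M - map_mx polyC L.
  by apply/matrixP => i j; rewrite !mxE rmorphB /= comp_polyC rmorphMn /= comp_polyX.
have e2 : q%:M - map_mx polyC (a *: L) = a%:P *: (q'%:M - map_mx polyC L).
  apply/matrixP => i j; rewrite !mxE mulrBr polyCM mulrnAr /q'.
  by rewrite [a%:P * (_ *: _)]mul_polyC scalerA mulfV // scale1r.
rewrite e2 detZ -e1 det_map_mx -/(char_poly L) cL rmorph_prod /=.
rewrite -[in a%:P ^+ K](card_ord K) -prodr_const -big_split /=.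
apply: eq_bigr => i _.
rewrite rmorphB /= comp_polyX comp_polyC mulrBr mul_polyC /q' scalerA mulfV //.
by rewrite scale1r polyCM.
Qed.

(* Left multiplication by [[X, B], [0, X]] makes the matrix block lower triangular. *)
Lemma char_poly_bipartite (R : comNzRingType) n1 n2 (B : 'M[R]_(n1, n2)) :
  'X ^+ (n1 + n2) * char_poly (block_mx 0 B B^T 0) =
  'X ^+ (2 * n2) * \det (('X ^+ 2)%:M - map_mx polyC (B *m B^T)).
Proof.
set Bp := map_mx polyC B.
have eM : char_poly_mx (block_mx 0 B B^T 0) =
          block_mx ('X%:M) (- Bp) (- Bp^T) ('X%:M).
  rewrite /char_poly_mx map_block_mx !map_mx0 (scalar_mx_block n1 n2).
  by rewrite opp_block_mx add_block_mx !oppr0 !addr0 !add0r map_trmx.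
pose P := block_mx ('X%:M : 'M_n1) Bp 0 ('X%:M : 'M_n2).
have dP : \det P = 'X ^+ (n1 + n2) by rewrite det_ublock !det_scalar exprD.
have eP : P *m char_poly_mx (block_mx 0 B B^T 0) =
   block_mx (('X ^+ 2)%:M - map_mx polyC (B *m B^T)) 0 (- ('X *: Bp^T)) (('X ^+ 2)%:M).
  rewrite eM mulmx_block !mul0mx !add0r !mul_scalar_mx mulmxN mul_mx_scalar.
  by rewrite !scalerN addNr map_mxM map_trmx -/Bp !scale_scalar_mx -expr2.
rewrite /char_poly -dP -det_mulmx eP det_lblock det_scalar -exprM mulrC.
by rewrite mulnC.
Qed.

Section SignedGraph.
Variables (n m : nat) (u v : 'I_m -> 'I_n) (sigma : 'I_m -> int).

Local Notation adj := (adjr u v).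
Local Notation neg := (neg_edge u v sigma).

Lemma joinsC k i j : joins u v k i j = joins u v k j i.
Proof. by rewrite /joins orbC. Qed.

Lemma adjrC i j : adj i j = adj j i.
Proof. by apply/existsP/existsP => -[k H]; exists k; rewrite joinsC. Qed.

Lemma neg_edgeC i j : neg i j = neg j i.
Proof. by apply/existsP/existsP => -[k H]; exists k; rewrite joinsC. Qed.

Lemma joins_uv k : joins u v k (u k) (v k).
Proof. by rewrite /joins !eqxx. Qed.

Definition walk_negs (x : 'I_n) (s : seq 'I_n) : nat :=
  count (fun ab => neg ab.1 ab.2) (zip (x :: s) s).

Lemma num_neg_edges_cons x s :
  num_neg_edges u v sigma (x :: s) = walk_negs x (rcons s x).
Proof.
by rewrite /num_neg_edges /walk_negs rot1_cons -rcons_cons zip_rconsl // size_rcons.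
Qed.

Lemma num_neg_edges_rot k c :
  num_neg_edges u v sigma (rot k c) = num_neg_edges u v sigma c.
Proof.
rewrite /num_neg_edges rot_rot zip_rot ?size_rot //.
by apply/seq.permP; rewrite perm_rot.
Qed.

Lemma walk_negs_cat x s t :
  walk_negs x (s ++ t) = (walk_negs x s + walk_negs (last x s) t)%N.
Proof.
by elim: s x => [|a s IH] x //=; rewrite /walk_negs /= -/(walk_negs a _) IH addnA.
Qed.

Hypotheses (simple : simple_signed_graph u v sigma) (conn : connected_graph u v).

Lemma adjr_irr i : adj i i = false.
Proof.
case: simple => uv _; apply/negbTE/existsP => -[k].
by rewrite /joins orbb => /andP[/eqP a /eqP b]; move: (uv k); rewrite a b eqxx.
Qed.

Lemma neg_edge_joins k i j : joins u v k i j -> neg i j = (sigma k == -1).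
Proof.
case: simple => _ [edge_uniq _] jk; apply/existsP/idP => [[l /andP[jl /eqP <-]]|s1].
  suff -> : k = l by [].
  apply: edge_uniq; move: jk jl; rewrite /joins.
  by case/orP=> /andP[/eqP -> /eqP ->] /orP[] /andP[/eqP -> /eqP ->] //; rewrite setUC.
by exists k; rewrite jk.
Qed.

Section Balanced.
Hypothesis bal : balanced u v sigma.

(* A closed walk that is not a cycle splits at a repeated vertex into two
   shorter closed walks. *)
Lemma closed_walk_even c : cycle adj c -> ~~ odd (num_neg_edges u v sigma c).
Proof.
elim: {c}(size c).+1 {-2}c (ltnSn (size c)) => // N IH c.
case: (boolP (uniq c)) => [uc|nu] sc cc.
  case: (ltnP 2 (size c)) => [c2|].
    by apply: bal; rewrite /is_cycle uc c2 cc.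
  case: c cc {sc uc} => [|x [|y [|z c]]] //=; first by rewrite adjr_irr.
  by rewrite /num_neg_edges /= neg_edgeC addn0 addnn odd_double.
have [a [y [b [d ec]]]] := not_uniq_split nu.
have := num_neg_edges_rot (size a) c; have := rot_cycle (size a) adj c.
rewrite {1 3}ec rot_size_cat cat_cons -catA cc => cc' <-.
have E : rcons (b ++ (y :: d) ++ a) y = rcons b y ++ rcons (d ++ a) y.
  by rewrite cat_rcons rcons_cat.
move: cc'; rewrite num_neg_edges_cons /cycle E walk_negs_cat cat_path last_rcons.
rewrite -!num_neg_edges_cons -/(cycle adj (y :: b)) -/(cycle adj (y :: (d ++ a))).
case/andP=> c1 c2; rewrite oddD (negbTE (IH _ _ c1)) ?(negbTE (IH _ _ c2)) //;
  move: sc; rewrite ec !size_cat /= ?size_cat /=; lia.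
Qed.

(* The signed double cover of the graph: its vertex [(i, b)] records the parity
   [b] of negative edges on a walk reaching [i]. *)
Definition cover_rel : rel ('I_n * bool) :=
  fun a b => adj a.1 b.1 && (b.2 == a.2 (+) neg a.1 b.1).

Lemma cover_relC : symmetric cover_rel.
Proof.
move=> [a1 a2] [b1 b2]; rewrite /cover_rel /= adjrC neg_edgeC.
by case: (adj _ _) => //=; case: a2; case: b2; case: (neg _ _).
Qed.

Lemma cover_path a P : path cover_rel a P ->
  path adj a.1 (map fst P) && ((last a P).2 == a.2 (+) odd (walk_negs a.1 (map fst P))).
Proof.
elim: P a => [|b P IH] a /=; first by rewrite addbF eqxx.
case/andP=> /andP[ab /eqP b2] /IH /andP[pP /eqP e]; rewrite ab pP /= e b2.
by rewrite /walk_negs /= oddD oddb addbA.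
Qed.

Lemma cover_connect_flip x b : ~~ connect cover_rel (x, b) (x, ~~ b).
Proof.
apply/negP=> /connectP[P pP lP]; have /andP[pa /eqP e] := cover_path pP.
rewrite -lP /= in e; have cl : last x (map fst P) = x.
  by rewrite -[x in last x _]/((x, b).1) last_map -lP.
move: e; rewrite /= {pP lP}.
case/lastP: (map fst P) pa cl => [|s z] //= pa; first by case: b.
rewrite last_rcons => ez; subst z; move: (closed_walk_even (pa : cycle adj (x :: s))).
by rewrite num_neg_edges_cons; case: b; case: (odd _).
Qed.

Lemma cover_connect_lift x y b :
  connect adj x y -> exists b', connect cover_rel (x, b) (y, b').
Proof.
case/connectP=> s; elim: s x b => [|z s IH] x b /=.
  by move=> _ ->; exists b; exact: connect0.
case/andP=> xz pz ly; have [b' H] := IH z (b (+) neg x z) pz ly.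
exists b'; apply: connect_trans H; apply: connect1.
by rewrite /cover_rel /= xz eqxx.
Qed.

Definition switching (r j : 'I_n) : int :=
  if connect cover_rel (r, false) (j, false) then 1 else -1.

Lemma switching_root r : switching r r = 1.
Proof. by rewrite /switching connect0. Qed.

Lemma switchingE r j b :
  connect cover_rel (r, false) (j, b) -> switching r j = (-1) ^+ b.
Proof.
rewrite /switching; case: b => H; last by rewrite H.
case: ifP => // H2; have /negP[] := cover_connect_flip j false.
by apply: connect_trans H; rewrite (sym_connect_sym cover_relC).
Qed.

Lemma switching_edge r k : switching r (v k) = sigma k * switching r (u k).
Proof.
have [b Hu] := cover_connect_lift false (conn r (u k)).
have ab : adj (u k) (v k) by apply/existsP; exists k; exact: joins_uv.
have Hv : connect cover_rel (r, false) (v k, b (+) neg (u k) (v k)).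
  by apply: connect_trans Hu _; apply: connect1; rewrite /cover_rel /= ab eqxx.
rewrite (switchingE Hu) (switchingE Hv) signr_addb mulrC (neg_edge_joins (joins_uv k)).
by case: simple => _ [_ /(_ k)] [] ->.
Qed.

End Balanced.

Section Incidence.
Variables (thu thv : 'I_m -> int).
Hypothesis orient : orientation sigma thu thv.

Definition inc (i : 'I_n) (k : 'I_m) : int :=
  (if i == u k then thu k else 0) + (if i == v k then thv k else 0).

Definition inc_mx (R : nzRingType) : 'M[R]_(n, m) := \matrix_(i, k) (inc i k)%:~R.

Lemma inc_mul_int (a b s : int) (iu iv ju jv ij : bool) :
  (a = 1 \/ a = -1) -> (b = 1 \/ b = -1) -> a * b = - s ->
  ~~ (iu && iv) -> ~~ (ju && jv) -> (ij -> (iu == ju) && (iv == jv)) ->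
  (~~ ij -> ~~ (iu && ju) && ~~ (iv && jv)) ->
  ((if iu then a else 0) + (if iv then b else 0)) *
  ((if ju then a else 0) + (if jv then b else 0)) =
  (if ij then ((iu || iv) : int) else 0) - (if (iu && jv) || (ju && iv) then s else 0).
Proof.
move=> [->|->] [->|->] e; rewrite -[s]opprK -e;
   case: iu; case: iv; case: ju; case: jv; case: ij => //= _ _ H1 H2;
   first [by move: (H1 isT) | by move: (H2 isT) | done].
Qed.

Lemma inc_mul i j k : inc i k * inc j k =
  (if i == j then (((u k == i) || (v k == i)) : int) else 0) -
  (if joins u v k i j then sigma k else 0).
Proof.
case: orient => hu [hv huv]; case: simple => uv _.
have not_both w : ~~ ((w == u k) && (w == v k)).
  by apply/negP=> /andP[/eqP a /eqP b]; move: (uv k); rewrite -a -b eqxx.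
rewrite /inc /joins ![_ == u k]eq_sym ![_ == v k]eq_sym.
apply: inc_mul_int; rewrite ?[u k == _]eq_sym ?[v k == _]eq_sym ?not_both //.
- by move/eqP->; rewrite !eqxx.
- move=> ij; apply/andP; split; apply/negP=> /andP[/eqP a /eqP b];
    by move: ij; rewrite a b eqxx.
Qed.

Lemma lap_mx_inc (R : nzRingType) : lap_mx u v sigma R = inc_mx R *m (inc_mx R)^T.
Proof.
apply/matrixP=> i j; rewrite !mxE.
under [RHS]eq_bigr do rewrite !mxE -intrM inc_mul intrB.
rewrite sumrB; congr (_ - _); last first.
  by rewrite big_mkcond /=; apply: eq_bigr => k _; case: ifP.
have [->|ij] := eqVneq i j; last by rewrite big1.
rewrite /degree -sum1_card big_mkcond /= natr_sum.
by apply: eq_bigr => k _; rewrite inE; case: (_ || _).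
Qed.

Lemma inc_mx_row_mul (R : nzRingType) (x : 'rV[R]_n) k :
  (x *m inc_mx R) 0 k = x 0 (u k) * (thu k)%:~R + x 0 (v k) * (thv k)%:~R.
Proof.
have delta w (c : int) : \sum_i x 0 i * (if i == w then c else 0)%:~R = x 0 w * c%:~R.
  by rewrite (bigD1 w) //= eqxx big1 ?addr0 // => i /negbTE ->; rewrite mulr0.
by rewrite mxE; under eq_bigr do rewrite mxE intrD mulrDr; rewrite big_split /= !delta.
Qed.

Section LeftKernel.
Variables (R : realFieldType) (x : 'rV[R]_n).
Hypothesis x_ker : x *m inc_mx R = 0.

Lemma ker_edge k : x 0 (u k) = (sigma k)%:~R * x 0 (v k).
Proof.
have := congr1 (fun y : 'rV[R]_m => y 0 k) x_ker; rewrite /= inc_mx_row_mul mxE.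
case: orient => hu [hv /(_ k) huv]; rewrite -[sigma k]opprK -huv.
case: (hu k) => ->; case: (hv k) => -> /=;
  rewrite ?(mulN1r, mulr1, opprK, intrN, mulNr, mul1r, mulrN); lra.
Qed.

Lemma ker_edge_norm k : `|x 0 (u k)| = `|x 0 (v k)|.
Proof.
rewrite ker_edge normrM; case: simple => _ [_ /(_ k)] [] ->.
  by rewrite normr1 mul1r.
by rewrite normrN normr1 mul1r.
Qed.

Lemma ker_norm_const i j : `|x 0 i| = `|x 0 j|.
Proof.
have /connectP[s ps ->] := conn i j.
elim: s i ps => //= z s IH i /andP[/existsP[k jk] ps]; rewrite -IH //.
by case/orP: jk => /andP[/eqP <- /eqP <-]; rewrite ker_edge_norm.
Qed.

Lemma ker_eq0 r : x 0 r = 0 -> x = 0.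
Proof.
move=> xr; apply/rowP => j; rewrite mxE; apply/normr0_eq0.
by rewrite (ker_norm_const j r) xr normr0.
Qed.

Lemma ker_edge_sign k : x 0 (v k) != 0 ->
  (x 0 (u k) < 0) = (sigma k == -1) (+) (x 0 (v k) < 0).
Proof.
move=> nz; rewrite ker_edge; case: simple => _ [_ /(_ k)] [] -> /=.
  by rewrite mul1r.
by rewrite mulN1r oppr_lt0 lt0r nz /= leNgt.
Qed.

(* Along every edge the sign of [x] flips exactly when the edge is negative. *)
Lemma ker_nz_balanced r : x 0 r != 0 -> balanced u v sigma.
Proof.
move=> xr; pose sg a := x 0 a < 0.
have nz j : x 0 j != 0 by rewrite -normr_eq0 (ker_norm_const j r) normr_eq0.
have neg_sg a b : adj a b -> neg a b = sg a (+) sg b.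
  case/existsP=> k jk; rewrite (neg_edge_joins jk) /sg.
  by case/orP: jk => /andP[/eqP <- /eqP <-]; rewrite ker_edge_sign //;
    case: (sigma k == -1); case: (x 0 (v k) < 0).
have par y s : path adj y s -> odd (walk_negs y s) = sg y (+) sg (last y s).
  elim: s y => [|z s IH] y /=; first by rewrite addbb.
  case/andP=> yz ps; rewrite /walk_negs /= -/(walk_negs z s) oddD oddb (IH _ ps).
  by rewrite (neg_sg _ _ yz); case: (sg y); case: (sg z); case: (sg (last z s)).
move=> [|y s] //; rewrite /is_cycle => /and3P[_ _ cyc].
by rewrite num_neg_edges_cons (par _ _ cyc) last_rcons addbb.
Qed.

End LeftKernel.

Lemma inc_mx_row_free (R : realFieldType) :
  ~ balanced u v sigma -> row_free (inc_mx R).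
Proof.
move=> unbal; apply: inj_row_free => x x_ker; apply/rowP => j; rewrite [RHS]mxE.
by have [//|/(ker_nz_balanced x_ker) /unbal] := eqVneq (x 0 j) 0.
Qed.

(* A kernel vector is determined by one coordinate, so the kernel has rank at most one. *)
Lemma inc_mx_rank_ge (R : realFieldType) : (n <= (\rank (inc_mx R)).+1)%N.
Proof.
have [n0|n_gt0] := posnP n; first by rewrite [X in (X <= _)%N]n0.
pose K := kermx (inc_mx R); pose e : 'cV[R]_n := delta_mx (Ordinal n_gt0) 0.
have Ke0 : (K :&: kermx e)%MS = 0.
  apply/row_matrixP => i; rewrite row0; set w := row i _.
  have wK : (w <= K)%MS by rewrite (submx_trans (row_sub i _)) ?capmxSl.
  have we : (w <= kermx e)%MS by rewrite (submx_trans (row_sub i _)) ?capmxSr.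
  apply: (ker_eq0 (sub_kermxP wK) (r := Ordinal n_gt0)).
  have := congr1 (fun y : 'cV[R]_1 => y 0 0) (sub_kermxP we); rewrite !mxE /= => <-.
  by rewrite (bigD1 (Ordinal n_gt0)) //= !mxE !eqxx mulr1 big1 ?addr0 // => j;
    rewrite !mxE => /negbTE ->; rewrite mulr0.
have := mxrank_mul_ker K e; rewrite Ke0 mxrank0 addn0 mxrank_ker.
by have := rank_leq_col (K *m e); lia.
Qed.

Section BalancedKernel.
Variables (R : realFieldType) (r : 'I_n).
Hypothesis bal : balanced u v sigma.

Definition switching_row : 'rV[R]_n := \row_j (switching r j)%:~R.

Lemma switching_row_ker : switching_row *m inc_mx R = 0.
Proof.
apply/rowP => k; rewrite inc_mx_row_mul !mxE (switching_edge bal).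
case: orient => hu [hv /(_ k) huv]; rewrite -[sigma k]opprK -huv.
case: (hu k) => ->; case: (hv k) => -> /=;
  rewrite ?(mulN1r, mulr1, opprK, intrN, mulNr, mul1r, mulrN, intrM); lra.
Qed.

Lemma lap_mx_det_balanced : \det (lap_mx u v sigma R) = 0.
Proof.
apply/eqP/det0P; exists switching_row.
  by apply/negP => /eqP/rowP/(_ r); rewrite !mxE switching_root => /eqP; rewrite oner_eq0.
by rewrite lap_mx_inc mulmxA switching_row_ker mul0mx.
Qed.

End BalancedKernel.

Section Subdivision.
Variable p : nat.

Local Notation subdiv := #|{: 'I_p * 'I_m}|.

Definition Sp_reindex (i : 'I_(n + subdiv)) : Sp_vertex n m p :=
  match split i with inl j => inl j | inr k => inr (enum_val k) end.

Lemma Sp_reindex_bij : bijective Sp_reindex.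
Proof.
pose g (x : Sp_vertex n m p) : 'I_(n + subdiv) :=
  unsplit (match x with inl j => inl j | inr y => inr (enum_rank y) end).
exists g => [i|[j|y]]; rewrite /Sp_reindex /g ?unsplitK ?enum_rankK //.
by rewrite -[RHS]splitK; case: (split i) => // k; rewrite enum_valK.
Qed.

Definition Sp_block (R : nzRingType) : 'M[R]_(n, subdiv) :=
  \matrix_(i, k) (inc i (enum_val k).2)%:~R.

Lemma char_poly_Sp_adj_mx (R : comNzRingType) :
  char_poly (Sp_adj_mx u v R p thu thv) =
  char_poly (block_mx 0 (Sp_block R) (Sp_block R)^T 0).
Proof.
have lsplit (i : 'I_n) : split (lshift subdiv i) = inl i := unsplitK (inl _ i).
have rsplit (k : 'I_subdiv) : split (rshift n k) = inr k := unsplitK (inr _ k).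
rewrite -(char_poly_reindex _ (bij_comp (enum_rank_bij _) Sp_reindex_bij)).
congr char_poly; rewrite -[LHS]submxK; congr block_mx; apply/matrixP => i j;
  rewrite !mxE /= !enum_rankK /Sp_reindex ?lsplit ?rsplit //.
- by case: (enum_val j).
- by case: (enum_val i).
- by case: (enum_val i); case: (enum_val j).
Qed.

Lemma Sp_block_mul_tr (R : comNzRingType) :
  Sp_block R *m (Sp_block R)^T = p%:R *: (inc_mx R *m (inc_mx R)^T).
Proof.
apply/matrixP => i j; rewrite !mxE (reindex enum_rank) /=; last first.
  exact/onW_bij/enum_rank_bij.
under eq_bigr do rewrite !mxE enum_rankK.
rewrite -(pair_bigA _ (fun (_ : 'I_p) k => (inc i k)%:~R * (inc j k)%:~R)) /=.
rewrite sumr_const card_ord -[LHS]mulr_natl; congr (_ * _).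
by apply: eq_bigr => k _; rewrite !mxE.
Qed.

End Subdivision.
End Incidence.
End SignedGraph.

Unset Implicit Arguments.

Theorem theorem4p2 (R : rcfType) (n m : nat) (u v : 'I_m -> 'I_n)
    (sigma : 'I_m -> int) (p : nat) (thu thv : 'I_m -> int) (mu : 'I_n -> R) :
  simple_signed_graph u v sigma ->
  connected_graph u v ->
  (0 < n)%N ->
  (0 < p)%N ->
  orientation sigma thu thv ->
  (forall i j : 'I_n, (i <= j)%N -> mu j <= mu i) ->
  (forall i, 0 <= mu i) ->
  char_poly (lap_mx u v sigma R) = \prod_(i < n) ('X - (mu i)%:P) ->
  (balanced u v sigma ->
     (forall i : 'I_n, val i = n.-1 -> mu i = 0) /\
     char_poly (Sp_adj_mx u v R p thu thv) =
       'X ^+ (p * m + 2 - n) *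
       \prod_(i < n | (i < n.-1)%N)
          (('X - (Num.sqrt (p%:R * mu i))%:P) * ('X + (Num.sqrt (p%:R * mu i))%:P)))
  /\
  (~ balanced u v sigma ->
     char_poly (Sp_adj_mx u v R p thu thv) =
       'X ^+ (p * m - n) *
       \prod_(i < n)
          (('X - (Num.sqrt (p%:R * mu i))%:P) * ('X + (Num.sqrt (p%:R * mu i))%:P))).
Proof.
move=> simple conn n_gt0 p_gt0 orient mu_dec mu_ge0 charL.
pose F i := ('X - (Num.sqrt (p%:R * mu i))%:P) * ('X + (Num.sqrt (p%:R * mu i))%:P).
have FE i : 'X ^+ 2 - (p%:R * mu i)%:P = F i.
  by rewrite /F -subr_sqr -rmorphXn /= sqr_sqrtr // mulr_ge0 ?ler0n.
have key : 'X ^+ (n + p * m) * char_poly (Sp_adj_mx u v R p thu thv) =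
           'X ^+ (2 * (p * m)) * \prod_(i < n) F i.
  have subdivE : #|{: 'I_p * 'I_m}| = (p * m)%N by rewrite card_prod !card_ord.
  rewrite -subdivE char_poly_Sp_adj_mx char_poly_bipartite Sp_block_mul_tr.
  rewrite -(lap_mx_inc simple orient) (det_scalar_sub_scale _ _ charL) ?pnatr_eq0 -?lt0n //.
  by under eq_bigr do rewrite FE.
have X_neq0 k : ('X ^+ k : {poly R}) != 0 by rewrite expf_neq0 ?polyX_eq0.
have m_le : (m <= p * m)%N by rewrite leq_pmull.
split=> [bal|unbal]; last first.
  have /eqnP rkN := inc_mx_row_free simple conn orient R unbal.
  have n_le : (n <= m)%N by rewrite -{1}rkN rank_leq_col.
  apply: (mulfI (X_neq0 (n + p * m)%N)); rewrite key mulrA -exprD.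
  by congr (_ ^+ _ * _); lia.
have mu_last i : val i = n.-1 -> mu i = 0.
  have detL := lap_mx_det_balanced simple conn orient R (Ordinal n_gt0) bal.
  have [k muk] := char_poly_det0_root detL charL.
  move=> ei; apply/le_anti; rewrite mu_ge0 andbT -muk mu_dec // ei.
  by have := ltn_ord k; lia.
split=> //; have n_le : (n <= m.+1)%N.
  by apply: leq_trans (inc_mx_rank_ge simple conn orient R) _; rewrite ltnS rank_leq_col.
apply: (mulfI (X_neq0 (n + p * m)%N)); rewrite key.
have last_lt : (n.-1 < n)%N by rewrite prednK.
rewrite (bigD1 (Ordinal last_lt)) //= {1}/F mu_last // mulr0 sqrtr0 subr0 addr0.
rewrite (eq_bigl (fun i : 'I_n => (i < n.-1)%N)); last first.
  by move=> i /=; rewrite -val_eqE /=; have := ltn_ord i; case: ltngtP; lia.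
rewrite mulrA -expr2 -exprD mulrA -exprD; congr (_ ^+ _ * _); lia.
Qed.
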